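(* Let $H$ be a separable complex Hilbert space, $(\Omega,\mu)$ a measure space with positive measure, let $K\in B(H)$ have closed range, let $F:\Omega\to H$ be a Parseval continuous $K$-frame of $H$, and let $\tilde F(\omega)=K^{\dagger}F(\omega)$ be its canonical dual continuous $K$-Bessel sequence. Then: (1) $\tilde F$ is a Parseval continuous frame for the Hilbert space $(\mathcal{N}(K))^{\perp}$, i.e. $\int_\Omega|\langle f,\tilde F(\omega)\rangle|^2\,d\mu(\omega)=\|f\|^2$ for all $f\in(\mathcal{N}(K))^{\perp}$; (2) $\tilde F$ is a Parseval continuous $K^{\dagger}K$-frame of $H$, i.e. $\int_\Omega|\langle f,\tilde F(\omega)\rangle|^2\,d\mu(\omega)=\|(K^{\dagger}K)^{\ast}f\|^2$ for all $f\in H$; and $K\tilde F$ (i.e. $\omega\mapsto KK^{\dagger}F(\omega)$) is a Parseval continuous $K$-frame of $H$.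
   Context: $\mathcal{N}(K)$ is the null space of $K$. A map $F:\Omega\to H$ is weakly measurable if $\omega\mapsto\langle f,F(\omega)\rangle$ is measurable for every $f\in H$. For $L\in B(H)$, a Parseval continuous $L$-frame is a weakly measurable $F$ with $\int_\Omega|\langle f,F(\omega)\rangle|^2\,d\mu(\omega)=\|L^{\ast}f\|^2$ for all $f\in H$. $K^{\dagger}$ denotes the Moore–Penrose pseudo-inverse of the closed-range operator $K$. The canonical dual continuous $K$-Bessel sequence of a Parseval continuous $K$-frame $F$ is $K^{\dagger}F$; it satisfies $Kf=\int_\Omega\langle f,K^\dagger F(\omega)\rangle F(\omega)\,d\mu(\omega)$ for all $f\in H$. *)

From HB Require Import structures.
From mathcomp Require Import all_boot all_order all_algebra.
From mathcomp Require Import all_classical all_reals all_analysis.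
From mathcomp Require Import complex.
Set Implicit Arguments. Unset Strict Implicit. Unset Printing Implicit Defensive.
Import Order.TTheory GRing.Theory Num.Theory.
Import numFieldNormedType.Exports.
Local Open Scope classical_set_scope.
Local Open Scope ring_scope.

Section Hilbert.
Variables (R : realType).
Local Notation C := (R[i]).
Variable (H : completeNormedModType C).

Definition cabs2 (z : C) : R := complex.Re z ^+ 2 + complex.Im z ^+ 2.

(* ||x||^2 as a real number (the norm of H is C-valued but real) *)
Definition nrm2 (x : H) : R := complex.Re (`|x| ^+ 2).

(* ip is an inner product on H (linear in the first argument,
   conjugate symmetric) inducing the norm of H; since H is complete,
   (H, ip) is a complex Hilbert space. *)
Definition is_inner_product (ip : H -> H -> C) : Prop :=
  [/\ forall (a : C) (x y z : H), ip (a *: x + y) z = a * ip x z + ip y z,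
      forall x y : H, ip y x = (ip x y)^*
    & forall x : H, ip x x = `|x| ^+ 2].

Definition separable_space : Prop :=
  exists D : set H, countable D /\ closure D = setT.

(* L is a bounded (= continuous) C-linear operator on H, i.e. L \in B(H) *)
Definition bounded_op (L : H -> H) : Prop :=
  (forall (a : C) (x y : H), L (a *: x + y) = a *: L x + L y) /\ continuous L.

Definition closed_range (L : H -> H) : Prop := closed (range L).

Definition is_adjoint (ip : H -> H -> C) (L Ls : H -> H) : Prop :=
  forall x y : H, ip (L x) y = ip x (Ls y).

Definition is_pseudo_inverse (ip : H -> H -> C) (K Kd : H -> H) : Prop :=
  [/\ bounded_op Kd,
      forall x, K (Kd (K x)) = K x,
      forall x, Kd (K (Kd x)) = Kd x,
      is_adjoint ip (K \o Kd) (K \o Kd)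
    & is_adjoint ip (Kd \o K) (Kd \o K)].

Definition null_space (K : H -> H) : set H := [set x | K x = 0].
Definition orth (ip : H -> H -> C) (A : set H) : set H :=
  [set f | forall g, A g -> ip f g = 0].

Variables (d : measure_display) (Omega : measurableType d).

Definition weakly_measurable (ip : H -> H -> C) (F : Omega -> H) : Prop :=
  forall f : H,
    measurable_fun setT (fun w => complex.Re (ip f (F w))) /\
    measurable_fun setT (fun w => complex.Im (ip f (F w))).

Definition parseval_cLframe (ip : H -> H -> C)
    (mu : {measure set Omega -> \bar R}) (L : H -> H) (F : Omega -> H) : Prop :=
  weakly_measurable ip F /\
  exists Ls : H -> H, is_adjoint ip L Ls /\
    forall f : H,
      (\int[mu]_(w in setT) (cabs2 (ip f (F w)))%:E = (nrm2 (Ls f))%:E)%E.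

Definition parseval_cframe_sub (ip : H -> H -> C)
    (mu : {measure set Omega -> \bar R}) (V : set H) (F : Omega -> H) : Prop :=
  [/\ weakly_measurable ip F, forall w, V (F w)
    & forall f : H, V f ->
      (\int[mu]_(w in setT) (cabs2 (ip f (F w)))%:E = (nrm2 f)%:E)%E].

End Hilbert.

(* For a bounded T with adjoint T^*, <f, T F(w)> = <T^* f, F(w)>, so T F is a
   Parseval continuous (T K)-frame whenever F is a Parseval continuous K-frame.
   T = K^dagger gives the K^dagger K-frame, and T = K K^dagger gives the K-frame
   since K K^dagger K = K.  On N(K)^perp, which contains the range of
   K^dagger, the self-adjoint operator K^dagger K is the identity, so the
   K^dagger K-frame identity is the Parseval identity there.  The only analytic
   input is the adjoint of K^dagger, i.e. the Riesz representation theorem,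
   proved via the nearest point to x0 in the kernel of a functional: x0 minus
   that point is orthogonal to the kernel. *)

From HB Require Import structures.
From mathcomp Require Import all_boot all_order all_algebra.
From mathcomp Require Import all_classical all_reals all_analysis.
From mathcomp Require Import complex.
From mathcomp Require Import ring lra.
Import Order.TTheory GRing.Theory Num.Theory.
Import numFieldNormedType.Exports.
Local Open Scope classical_set_scope.
Local Open Scope ring_scope.

Lemma le_sqr_of_approx (R : realFieldType) (A d : R) : 0 <= A ->
  (forall e, 0 < e -> exists2 B, B ^+ 2 <= d + e & A <= B + e) -> A ^+ 2 <= d.
Proof.
move=> A0 approx; apply/ler_addgt0Pr => e e0.
have t0 : 0 < e / (1 + 2 * A) by rewrite divr_gt0 //; lra.
have [B B2 AB] := approx _ t0; set t := e / _ in t0 B2 AB.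
have te : t * (1 + 2 * A) = e by rewrite divfK // gt_eqF //; lra.
have [At | tA] := lerP A t; first nra.
have : (A - t) ^+ 2 <= B ^+ 2 by rewrite ler_sqr ?nnegrE; lra.
nra.
Qed.

Section BoundedOperators.
Context {R : realType} {H : completeNormedModType R[i]} {L : H -> H}.
Hypothesis L_bdd : bounded_op L.

Lemma bounded_op0 : L 0 = 0.
Proof. by have := L_bdd.1 (-1) 0 0; rewrite scaler0 addr0 scaleN1r addNr. Qed.

Lemma bounded_opB x y : L (x - y) = L x - L y.
Proof. by rewrite addrC -scaleN1r L_bdd.1 scaleN1r addrC. Qed.

End BoundedOperators.

Section InnerProduct.
Context {R : realType} {H : completeNormedModType R[i]} {ip : H -> H -> R[i]}.
Hypothesis ip_inner : is_inner_product ip.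
Local Notation C := R[i].
(* [R[i]] viewed as a numFieldType, which carries its normed topology *)
Local Notation Ctop := (Num.NumField.sort C).
Implicit Types (c : C) (x y z : H).

Lemma ipDZl c x y z : ip (c *: x + y) z = c * ip x z + ip y z.
Proof. by case: ip_inner. Qed.

Lemma ipC x y : ip y x = (ip x y)^*.
Proof. by case: ip_inner. Qed.

Lemma ipxx x : ip x x = `|x| ^+ 2.
Proof. by case: ip_inner. Qed.

Lemma ip0l z : ip 0 z = 0.
Proof. by have := ipDZl (-1) 0 0 z; rewrite scaler0 addr0 mulN1r addNr. Qed.

Lemma ipDl x y z : ip (x + y) z = ip x z + ip y z.
Proof. by rewrite -[x in LHS]scale1r ipDZl mul1r. Qed.

Lemma ipZl c x z : ip (c *: x) z = c * ip x z.
Proof. by rewrite -[_ *: _]addr0 ipDZl ip0l addr0. Qed.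

Lemma ipNl x z : ip (- x) z = - ip x z.
Proof. by rewrite -scaleN1r ipZl mulN1r. Qed.

Lemma ipBl x y z : ip (x - y) z = ip x z - ip y z.
Proof. by rewrite ipDl ipNl. Qed.

Lemma ip0r z : ip z 0 = 0.
Proof. by rewrite ipC ip0l conjC0. Qed.

Lemma ipDr x y z : ip z (x + y) = ip z x + ip z y.
Proof. by rewrite ipC ipDl rmorphD /= -!ipC. Qed.

Lemma ipZr c x z : ip z (c *: x) = c^* * ip z x.
Proof. by rewrite ipC ipZl rmorphM /= -ipC. Qed.

Lemma ipNr x z : ip z (- x) = - ip z x.
Proof. by rewrite ipC ipNl rmorphN /= -ipC. Qed.

Lemma ipBr x y z : ip z (x - y) = ip z x - ip z y.
Proof. by rewrite ipDr ipNr. Qed.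

Definition nr x : R := complex.Re `|x|.

Lemma normE x : `|x| = (nr x)%:C%C.
Proof. by rewrite /nr; case: `|x| (normr_ge0 x) => r s /ger0_Im /= ->. Qed.

Lemma nr_ge0 x : 0 <= nr x.
Proof. by have := normr_ge0 x; rewrite lecE => /andP[]. Qed.

Lemma ler_nrD x y : nr (x + y) <= nr x + nr y.
Proof. by rewrite -lecR rmorphD /= -!normE ler_normD. Qed.

Lemma nrm2E x : nrm2 x = nr x ^+ 2.
Proof. by rewrite /nrm2 normE -rmorphXn. Qed.

Lemma nrm2_ge0 x : 0 <= nrm2 x.
Proof. by rewrite nrm2E sqr_ge0. Qed.

Lemma ipxxE x : ip x x = (nrm2 x)%:C%C.
Proof. by rewrite ipxx normE -rmorphXn nrm2E. Qed.

Lemma ipxx_eq0 x : ip x x = 0 -> x = 0.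
Proof. by rewrite ipxx => /eqP; rewrite expf_eq0 /= normr_eq0 => /eqP. Qed.

Lemma ipr_inj x y : (forall z, ip z x = ip z y) -> x = y.
Proof. by move=> xy; apply/subr0_eq/ipxx_eq0; rewrite ipBr xy subrr. Qed.

Lemma polarization y f : ip y f = 4^-1 * (`|y + f| ^+ 2 - `|y - f| ^+ 2
  + 'i%C * `|y + 'i%C *: f| ^+ 2 - 'i%C * `|y - 'i%C *: f| ^+ 2).
Proof.
have conj_i : ('i%C : C)^* = - 'i%C by apply/eqP; rewrite eq_complex /= oppr0 !eqxx.
rewrite -!ipxx !(ipDl, ipNl, ipDr, ipNr, ipZl, ipZr) conj_i.
transitivity (4^-1 * (4 * ip y f + ('i%C * 'i%C + 1) * (2 * ip f y - 2 * ip y f))).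
  by rewrite -expr2 sqr_i addNr mul0r addr0 mulrA mulVf ?pnatr_eq0 ?mul1r.
by congr (_ * _); ring.
Qed.

Lemma continuous_ipl f : continuous (ip ^~ f : H -> Ctop).
Proof.
have norm2_cont (v : H) : continuous (fun y => `|y + v| ^+ 2).
  by move=> y; apply: cvgM; apply: cvg_norm; apply: cvgD => //; exact: cvg_cst.
move=> y; rewrite (funext (polarization ^~ f)).
apply: cvgMl_tmp; apply: cvgB; first apply: cvgD; first apply: cvgB.
- exact: norm2_cont.
- exact: norm2_cont.
- by apply: cvgMl_tmp; apply: norm2_cont.
- by apply: cvgMl_tmp; apply: norm2_cont.
Qed.

Lemma parallelogram x y : nrm2 (x + y) + nrm2 (x - y) = 2 * nrm2 x + 2 * nrm2 y.
Proof.
apply: (@complexI R); rewrite !rmorphD !rmorphM /= !rmorph_nat -!ipxxE.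
by rewrite !(ipDl, ipBl, ipNl, ipDr, ipBr, ipNr); ring.
Qed.

Lemma ip_eq0_of_min z n : (forall t : C, nrm2 z <= nrm2 (z - t *: n)) -> ip z n = 0.
Proof.
move=> z_min; have [->|n0] := eqVneq n 0; first exact: ip0r.
have nn0 : ip n n != 0 by apply: contra n0 => /eqP/ipxx_eq0 ->.
have nn_real : (ip n n)^* = ip n n by rewrite -ipC.
have expand : ip (z - (ip z n / ip n n) *: n) (z - (ip z n / ip n n) *: n)
    = ip z z + - (ip z n * (ip z n)^* / ip n n).
  rewrite !(ipBl, ipBr, ipZl, ipZr) (ipC z n) fmorph_div /= nn_real.
  by field.
have := z_min (ip z n / ip n n); rewrite -lecR -!ipxxE expand.
rewrite lerDl oppr_ge0 -normCK ipxx pmulr_lle0 ?invr_gt0 ?exprn_gt0 ?normr_gt0 //.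
by move=> c_le0; apply/eqP; rewrite -normr_eq0 -sqrf_eq0 eq_le c_le0 exprn_ge0.
Qed.

Section NearestPoint.
Variables (A : set H) (x0 : H).
Hypotheses (A_closed : closed A) (A_neq0 : A !=set0)
  (A_midpoint : forall a b, A a -> A b -> A (2^-1 *: (a + b))).

Let D := [set nrm2 (x0 - a) | a in A].
Let d := inf D.

Let has_inf_D : has_inf D.
Proof.
split; first by case: A_neq0 => a Aa; exists (nrm2 (x0 - a)), a.
by exists 0 => _ [a _ <-]; apply: nrm2_ge0.
Qed.

Let d_le {a} : A a -> d <= nrm2 (x0 - a).
Proof. by move=> Aa; apply: ge_inf; [case: has_inf_D | exists a]. Qed.

Let d_approx e : 0 < e -> exists2 a, A a & nrm2 (x0 - a) < d + e.
Proof. by move=> e0; have [_ [a Aa <-] ?] := inf_adherent e0 has_inf_D; exists a. Qed.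

Let d_midpoint {a b} : A a -> A b ->
  nrm2 (a - b) <= 2 * (nrm2 (x0 - a) - d) + 2 * (nrm2 (x0 - b) - d).
Proof.
move=> Aa Ab; pose m := 2^-1 *: (a + b).
have := parallelogram (x0 - a) (x0 - b).
have -> : x0 - a - (x0 - b) = b - a by rewrite opprB addrC addrA subrK.
have mm : m + m = a + b by rewrite /m -scalerDl -div1r -splitr scale1r.
have -> : x0 - a + (x0 - b) = (x0 - m) + (x0 - m).
  by rewrite addrACA -opprD -mm opprD addrACA.
have := parallelogram (x0 - m) (x0 - m); rewrite subrr.
have := d_le (A_midpoint _ _ Aa Ab); rewrite -/m.
have -> : nrm2 (b - a) = nrm2 (a - b) by rewrite -opprB /nrm2 normrN.
have -> : nrm2 (0 : H) = 0 by rewrite /nrm2 normr0 expr0n.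
lra.
Qed.

Lemma exists_nearest_point : exists2 l, A l & forall a, A a -> nrm2 (x0 - l) <= nrm2 (x0 - a).
Proof.
pose ik k : R := k.+1%:R^-1.
have /choice [ns ns_approx] : forall k, exists a, A a /\ nrm2 (x0 - a) < d + ik k.
  move=> k; have [|a] := d_approx (ik k); last by exists a.
  by rewrite invr_gt0.
have ns_close k m : nrm2 (ns k - ns m) <= 2 * ik k + 2 * ik m.
  have := d_midpoint (ns_approx k).1 (ns_approx m).1.
  have := (ns_approx k).2; have := (ns_approx m).2; lra.
have ns_cvg : cvg (ns @ \oo).
  apply/cauchy_cvgP/cauchy_exP => -[e im]; rewrite ltcE /= => /andP[/eqP -> e0].
  have e4 : 0 < e ^+ 2 / 4 by rewrite divr_gt0 ?exprn_gt0.
  have [M _ hM] := near_infty_natSinv_lt (PosNum e4).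
  exists (ns M), M => // k /= Mk.
  rewrite -ball_normE /ball_ /= normE ltcR.
  have hMM : ik M < e ^+ 2 / 4 := hM _ (leqnn M).
  have hMk : ik k < e ^+ 2 / 4 := hM _ Mk.
  have := ns_close M k; rewrite nrm2E; have := nr_ge0 (ns M - ns k); nra.
set l := lim (ns @ \oo); have ns_l : ns @ \oo --> l := ns_cvg.
exists l.
  by apply: (closed_cvg _ A_closed _ _ ns_l); apply: nearW => k; case: (ns_approx k).
move=> a Aa; apply: le_trans (d_le Aa); rewrite nrm2E.
apply: le_sqr_of_approx; first exact: nr_ge0.
move=> e e0; have [M _ hM] := near_infty_natSinv_lt (PosNum e0).
have [|N _ hN] := cvgr_dist_lt _ _ ns_l (e%:C%C); first by rewrite ltcR.
pose k := maxn M N; exists (nr (x0 - ns k)).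
  rewrite -nrm2E; apply/ltW/(lt_le_trans (ns_approx k).2).
  by rewrite lerD2l; apply/ltW/hM/leq_maxl.
have := hN k (leq_maxr _ _); rewrite distrC normE ltcR => lk.
have -> : x0 - l = (x0 - ns k) + (ns k - l) by rewrite addrA subrK.
by apply: le_trans (ler_nrD _ _) _; rewrite lerD2l ltW.
Qed.

End NearestPoint.

Lemma riesz_representation (phi : H -> C) :
  (forall c x y, phi (c *: x + y) = c * phi x + phi y) ->
  continuous (phi : H -> Ctop) -> exists v, forall x, phi x = ip x v.
Proof.
move=> phi_lin phi_cont.
have phi0 : phi 0 = 0 by have := phi_lin (-1) 0 0; rewrite scaler0 addr0 mulN1r addNr.
have phiZ c x : phi (c *: x) = c * phi x by rewrite -[_ *: _]addr0 phi_lin phi0 addr0.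
have phiD x y : phi (x + y) = phi x + phi y by rewrite -[x in LHS]scale1r phi_lin mul1r.
have [phi_eq0 | /existsNP[x0 /eqP phix0]] := pselect (forall x, phi x = 0).
  by exists 0 => x; rewrite phi_eq0 ip0r.
pose N := [set x | phi x = 0].
have N_closed : closed N.
  apply: (@preimage_closed _ _ (phi : H -> Ctop) [set 0]).
    by move=> x _; exact: phi_cont.
  exact/accessible_closed_set1/hausdorff_accessible/norm_hausdorff.
have N_mid a b : N a -> N b -> N (2^-1 *: (a + b)).
  by rewrite /N /= phiZ phiD => -> ->; rewrite addr0 mulr0.
have [l Nl l_min] := exists_nearest_point N x0 N_closed (ex_intro _ 0 phi0) N_mid.
pose z := x0 - l.
have z_orth n : N n -> ip z n = 0.
  move=> Nn; apply: ip_eq0_of_min => t; rewrite /z -addrA -opprD; apply: l_min.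
  by rewrite /N /= phiD phiZ Nl Nn mulr0 addr0.
have zz0 : ip z z != 0.
  apply: contra phix0 => /eqP/ipxx_eq0/subr0_eq ->; exact/eqP.
exists ((phi z / ip z z)^* *: z) => x; rewrite ipZr conjCK.
have : ip (phi x *: z - phi z *: x) z = 0.
  by rewrite ipC z_orth ?conjC0 // /N /= phiD -scaleNr !phiZ mulNr [phi x * _]mulrC subrr.
rewrite ipBl !ipZl => /eqP; rewrite subr_eq0 => /eqP e.
by rewrite mulrAC -e mulfK.
Qed.

Lemma adjoint_exists {T} : bounded_op T -> exists S, is_adjoint ip T S.
Proof.
move=> [T_lin T_cont].
have /choice [S S_adj] y : exists v, forall x, ip (T x) y = ip x v.
  apply: riesz_representation => [c x x'|x]; first by rewrite T_lin ipDZl.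
  exact: continuous_comp (T_cont x) (continuous_ipl _ _).
by exists S.
Qed.

Lemma adjoint_ipr {T S} : is_adjoint ip T S -> forall x y, ip x (T y) = ip (S x) y.
Proof. by move=> TS x y; rewrite ipC TS -ipC. Qed.

Lemma adjoint_uniq {T S1 S2} : is_adjoint ip T S1 -> is_adjoint ip T S2 -> S1 =1 S2.
Proof. by move=> TS1 TS2 y; apply: ipr_inj => x; rewrite -TS1 TS2. Qed.

Lemma adjoint_comp {T S L M} :
  is_adjoint ip T S -> is_adjoint ip L M -> is_adjoint ip (T \o L) (M \o S).
Proof. by move=> TS LM x y /=; rewrite TS LM. Qed.

Section Frames.
Context {d : measure_display} {Omega : measurableType d}.
Context {mu : {measure set Omega -> \bar R}}.

Lemma weakly_measurable_comp {T S} {F : Omega -> H} :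
  is_adjoint ip T S -> weakly_measurable ip F -> weakly_measurable ip (T \o F).
Proof.
move=> TS F_meas f; have [mRe mIm] := F_meas (S f).
by split; under eq_fun do rewrite /= (adjoint_ipr TS).
Qed.

Lemma parseval_cLframe_comp {L} {F : Omega -> H} {T S} : is_adjoint ip T S ->
  parseval_cLframe ip mu L F -> parseval_cLframe ip mu (T \o L) (T \o F).
Proof.
move=> TS [F_meas [Ls [LLs F_pars]]].
split; first exact: weakly_measurable_comp TS F_meas.
exists (Ls \o S); split; first exact: adjoint_comp.
by move=> f; rewrite -F_pars; apply: eq_integral => w _; rewrite /= (adjoint_ipr TS).
Qed.

End Frames.

Section PseudoInverse.
Context {K Kd : H -> H}.
Hypotheses (K_bdd : bounded_op K) (Kd_pinv : is_pseudo_inverse ip K Kd).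

Lemma pinv_range_orth x : orth ip (null_space K) (Kd x).
Proof.
move=> g Kg0; have [Kd_bdd _ KdKKd _ KdK_sa] := Kd_pinv.
by rewrite -KdKKd (KdK_sa (Kd x) g) /= Kg0 bounded_op0 // ip0r.
Qed.

Lemma pinvK_orth_null {f} : orth ip (null_space K) f -> Kd (K f) = f.
Proof.
move=> f_orth; have [_ KKdK _ _ _] := Kd_pinv.
pose r := f - Kd (K f).
have Kr0 : null_space K r by rewrite /null_space /= bounded_opB // KKdK subrr.
have : ip r r = 0 by rewrite {1}/r ipBl f_orth // pinv_range_orth // subrr.
by move/ipxx_eq0/subr0_eq.
Qed.

End PseudoInverse.

End InnerProduct.

Theorem lemma3p5 (R : realType) (H : completeNormedModType R[i])
  (ip : H -> H -> R[i]) (d : measure_display) (Omega : measurableType d)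
  (mu : {measure set Omega -> \bar R})
  (K Kd : H -> H) (F : Omega -> H) :
  is_inner_product ip -> separable_space H ->
  bounded_op K -> closed_range K ->
  is_pseudo_inverse ip K Kd ->
  parseval_cLframe ip mu K F ->
  let Ft := fun w => Kd (F w) in
  parseval_cframe_sub ip mu (orth ip (null_space K)) Ft /\
  parseval_cLframe ip mu (Kd \o K) Ft /\
  parseval_cLframe ip mu K (K \o Ft).
Proof.
move=> ip_inner _ K_bdd _ Kd_pinv F_frame Ft.
have [Kd_bdd KKdK _ KKd_sa KdK_sa] := Kd_pinv.
have [Kds Kd_adj] := adjoint_exists ip_inner Kd_bdd.
have Ft_frame : parseval_cLframe ip mu (Kd \o K) Ft :=
  parseval_cLframe_comp ip_inner Kd_adj F_frame.
split.
  have [Ft_meas [S [S_adj Ft_pars]]] := Ft_frame.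
  split=> // [w | f f_orth]; first exact: pinv_range_orth.
  rewrite Ft_pars (adjoint_uniq ip_inner S_adj KdK_sa) /=.
  by rewrite (pinvK_orth_null ip_inner K_bdd Kd_pinv f_orth).
split; first exact: Ft_frame.
have KKdK_eq : (K \o Kd) \o K = K by apply/funext => x /=; rewrite KKdK.
by have := parseval_cLframe_comp ip_inner KKd_sa F_frame; rewrite KKdK_eq.
Qed.
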